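(* Let $\Psi$ be a saturated root subsystem of $\Phi$, let $\Gamma$ be a gallery in $\Phi$, and let $\Delta$ be a gallery in $\Phi$ lifting $\Gamma_\Psi$. Let $p:[1,|\Gamma_\Psi|]\to[1,|\Gamma|]$ be the increasing embedding with image $I_\Psi(\Gamma)$. Then $(\Delta,\Gamma)$ is a $p$-pair whose sign and cosign are both positive.
   Context: $E$ is a finite-dimensional real Euclidean space with inner product $(\cdot,\cdot)$; $\Phi\subset E$ is a finite (reduced) root system (not necessarily spanning, not necessarily crystallographic) with reflections $\omega_\alpha$ through $L_\alpha=\alpha^\perp$. A root subsystem is a nonempty $\Psi\subset\Phi$ stable under $\omega_\alpha$, $\alpha\in\Psi$; it is saturated if $\Psi=\mathbb R\Psi\cap\Phi$. For $X\subset\Phi$, $\mathrm{Ch}_X$ is the set of connected components of $E\setminus\bigcup_{\alpha\in X}L_\alpha$; for $C\in\mathrm{Ch}_\Phi$, $C_\Psi$ is the chamber of $\mathrm{Ch}_\Psi$ containing $C$. Chambers $C,D\in\mathrm{Ch}_X$ are connected through $L_\alpha$ if $\overline C\cap\overline D\cap L_\alpha$ has nonempty interior in $L_\alpha$. A gallery in $X$ is a sequence $(C_0,L_{\alpha_1},C_1,\dots,L_{\alpha_n},C_n)$ with $C_j\in\mathrm{Ch}_X$, $\alpha_j\in X$, $C_{j-1},C_j$ connected through $L_{\alpha_j}$; its length is $n$, $C_j$ is its $j$th chamber and $(L_{\alpha_1},\dots,L_{\alpha_n})$ its sequence of walls. For a gallery $\Gamma=(C_0,L_{\alpha_1},\dots,L_{\alpha_n},C_n)$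 in $\Phi$, $I_\Psi(\Gamma)=\{i:\alpha_i\in\Psi\}=\{i_1<\dots<i_m\}$ and $\Gamma_\Psi=((C_0)_\Psi,L_{\alpha_{i_1}},(C_{i_1})_\Psi,\dots,L_{\alpha_{i_m}},(C_{i_m})_\Psi)$. For $C\in\mathrm{Ch}_\Phi$, $\Phi^s(C)$ is the unique simple system of $\Phi$ contained in $\Phi^+(C)=\{\alpha\in\Phi:(e,\alpha)>0\ \forall e\in C\}$; similarly $\Psi^s(D)$ for $D\in\mathrm{Ch}_\Psi$. $C\in\mathrm{Ch}_\Phi$ lifts $D\in\mathrm{Ch}_\Psi$ if $\Psi^s(D)\subset\Phi^s(C)$; a gallery in $\Phi$ lifts a gallery in $\Psi$ if they have the same sequence of walls and each $j$th chamber of the first lifts the $j$th chamber of the second. Given galleries $\Gamma=(C_0,L_{\alpha_1},\dots,L_{\alpha_n},C_n)$ and $\Delta=(D_0,L_{\beta_1},\dots,L_{\beta_m},D_m)$ in $\Phi$ and an increasing embedding $p:[1,m]\to[1,n]$, $(\Delta,\Gamma)$ is a $p$-pair if $L_{\alpha_{p(i)}}=L_{\beta_i}$ for all $i$. Its sign $(\epsilon_i)$ has $\epsilon_i=1$ if $L_{\beta_i}$ does not separate $D_i$ and $C_{p(i)}$ (i.e. they lie in the same open half-space of $L_{\beta_i}$) and $\epsilon_i=-1$ otherwise; its cosign $(\mu_i)$ has $\mu_i=1$ if $L_{\beta_i}$ does not separate $D_{i-1}$ and $C_{p(i)-1}$ and $\mu_i=-1$ otherwise. A sign or cosign is positive if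 all entries equal $1$. *)

From HB Require Import structures.
From mathcomp Require Import all_boot all_order all_algebra.
From mathcomp Require Import all_classical all_reals all_analysis.
Set Implicit Arguments. Unset Strict Implicit. Unset Printing Implicit Defensive.
Import Order.TTheory GRing.Theory Num.Theory.
Import numFieldNormedType.Exports.
Local Open Scope classical_set_scope.
Local Open Scope ring_scope.

Section RootDefs.
Variables (R : realType) (n : nat).
Notation E := 'rV[R]_n.

Definition dot (u v : E) : R := (u *m v^T) 0 0.

Definition refl (a x : E) : E := x - ((2 * dot x a) / dot a a) *: a.

Definition hyper (a : E) : set E := [set x | dot x a = 0].

(* finite reduced root system (not necessarily spanning / crystallographic) *)
Definition root_system (Phi : seq E) : Prop :=
  [/\ (0 : E) \notin Phi,
      (forall a b, a \in Phi -> b \in Phi -> refl a b \in Phi) &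
      (forall a (c : R), a \in Phi -> c *: a \in Phi -> c = 1 \/ c = -1)].

Definition root_subsystem (Phi Psi : seq E) : Prop :=
  [/\ Psi != [::], {subset Psi <= Phi} &
      (forall a b, a \in Psi -> b \in Psi -> refl a b \in Psi)].

Definition in_span (S : seq E) (v : E) : Prop :=
  exists c : nat -> R, v = \sum_(i < size S) c i *: S`_i.

(* saturated : Psi = R Psi \cap Phi *)
Definition saturated (Phi Psi : seq E) : Prop :=
  forall b, b \in Phi -> in_span Psi b -> b \in Psi.

Definition regular (X : seq E) : set E :=
  [set x | forall a, a \in X -> dot x a != 0].

Definition is_chamber (X : seq E) (C : set E) : Prop :=
  exists2 x, regular X x & C = connected_component (regular X) x.

Definition chamber_restr (Psi : seq E) (C : set E) : set E :=
  [set y | exists2 x, C x & connected_component (regular Psi) x y].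

(* C, D connected through L_alpha: closure C \cap closure D \cap L_alpha has
   nonempty interior in L_alpha *)
Definition connected_through (C D : set E) (a : E) : Prop :=
  exists x, hyper a x /\ exists2 e : R, 0 < e &
    forall y, hyper a y -> ball x e y -> closure C y /\ closure D y.

Definition pos_roots (X : seq E) (C : set E) : set E :=
  [set a | a \in X /\ forall e, C e -> dot e a > 0].

Definition lin_indep (S : seq E) : Prop :=
  forall c : nat -> R, \sum_(i < size S) c i *: S`_i = 0 ->
    forall i, (i < size S)%N -> c i = 0.

Definition simple_system (X S : seq E) : Prop :=
  [/\ uniq S, {subset S <= X}, lin_indep S &
      forall a, a \in X -> exists c : nat -> R,
        a = \sum_(i < size S) c i *: S`_i /\
        ((forall i, 0 <= c i) \/ (forall i, c i <= 0))].

(* X^s(C): the (unique) simple system of X contained in X^+(C) *)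
Definition simple_roots (X : seq E) (C : set E) : set E :=
  [set a | exists S, [/\ simple_system X S, (forall b, b \in S -> pos_roots X C b)
                        & a \in S]].

(* galleries: length, chambers C_0..C_len, roots alpha_1..alpha_len whose
   hyperplanes are the walls *)
Record gallery := Gallery {
  glen : nat;
  gch : nat -> set E;
  gwall : nat -> E }.

Definition is_gallery (X : seq E) (G : gallery) : Prop :=
  (forall j, (j <= glen G)%N -> is_chamber X (gch G j)) /\
  (forall j, (1 <= j <= glen G)%N ->
     gwall G j \in X /\ connected_through (gch G j.-1) (gch G j) (gwall G j)).

Definition I_Psi (Psi : seq E) (G : gallery) : seq nat :=
  [seq i <- iota 1 (glen G) | gwall G i \in Psi].

Definition restr_idx (Psi : seq E) (G : gallery) (j : nat) : nat :=
  if j is 0 then 0%N else nth 0%N (I_Psi Psi G) j.-1.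

Definition restr_gallery (Psi : seq E) (G : gallery) : gallery :=
  Gallery (size (I_Psi Psi G))
          (fun j => chamber_restr Psi (gch G (restr_idx Psi G j)))
          (fun j => gwall G (restr_idx Psi G j)).

Definition chamber_lifts (Phi Psi : seq E) (C D : set E) : Prop :=
  simple_roots Psi D `<=` simple_roots Phi C.

Definition gallery_lifts (Phi Psi : seq E) (G H : gallery) : Prop :=
  [/\ glen G = glen H,
      (forall j, (1 <= j <= glen G)%N -> hyper (gwall G j) = hyper (gwall H j)) &
      (forall j, (j <= glen G)%N -> chamber_lifts Phi Psi (gch G j) (gch H j))].

Definition incr_embedding_onto (p : nat -> nat) (m : nat) (I : seq nat) : Prop :=
  (forall i j, (1 <= i)%N -> (i < j)%N -> (j <= m)%N -> (p i < p j)%N) /\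
  (forall k, (exists i, (1 <= i <= m)%N /\ p i = k) <-> k \in I).

Definition p_pair (p : nat -> nat) (D G : gallery) : Prop :=
  forall i, (1 <= i <= glen D)%N -> hyper (gwall G (p i)) = hyper (gwall D i).

Definition same_side (b : E) (A B : set E) : Prop :=
  (A `<=` [set x | dot x b > 0] /\ B `<=` [set x | dot x b > 0]) \/
  (A `<=` [set x | dot x b < 0] /\ B `<=` [set x | dot x b < 0]).

Definition sign_positive (p : nat -> nat) (D G : gallery) : Prop :=
  forall i, (1 <= i <= glen D)%N -> same_side (gwall D i) (gch D i) (gch G (p i)).

Definition cosign_positive (p : nat -> nat) (D G : gallery) : Prop :=
  forall i, (1 <= i <= glen D)%N ->
    same_side (gwall D i) (gch D i.-1) (gch G (p i).-1).

End RootDefs.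

From HB Require Import structures.
From mathcomp Require Import all_boot all_order all_algebra.
From mathcomp Require Import all_classical all_reals all_analysis.
From mathcomp Require Import zify.
Set Implicit Arguments. Unset Strict Implicit. Unset Printing Implicit Defensive.

(* A wall L_a of Gamma with a in Psi is crossed at a chamber C whose closure contains an
   open patch of L_a. The sign of +-a that is positive on C is then a simple root of Psi for
   the Psi-chamber of C: expanding it in a simple system positive on C, every term is
   nonnegative on the patch and their sum vanishes there, so some simple root vanishes on an
   open piece of L_a and, the root system being reduced, equals +-a. As Delta lifts Gamma_Psi,
   this root is also simple, hence positive, for the matching chamber of Delta, whose wall is
   L_a again; this is the sign. For the cosign, crossing a wall outside Psi changes the sign
   of no root of Psi (it would vanish on the common patch), so the chamber just before the
   i-th Psi-wall has the same Psi-chamber as the (i-1)-th chamber of Gamma_Psi. *)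

Section IncreasingSequences.
Implicit Types (s : seq nat) (p : nat -> nat).

Lemma incr_embedding_onto_nth p m s : sorted ltn s -> incr_embedding_onto p m s ->
  forall i, (1 <= i <= m)%N -> p i = nth 0 s i.-1.
Proof.
move=> s_sorted [p_incr p_onto] i /andP[i_ge1 i_le_m].
have t_sorted : sorted ltn [seq p j | j <- iota 1 m].
  apply: (homo_sorted_in (P := mem (iota 1 m))) (allss _) (iota_ltn_sorted 1 m).
  by move=> j k; rewrite !mem_iota => /andP[j1 _] /andP[_ km] jk; apply: p_incr; lia.
have -> : s = [seq p j | j <- iota 1 m].
  apply: (irr_sorted_eq ltn_trans ltnn s_sorted t_sorted) => k.
  apply/idP/mapP => [/p_onto[j [jm <-]]|[j jm ->]].
    by exists j; rewrite // mem_iota; lia.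
  by apply/p_onto; exists j; rewrite mem_iota in jm; split=> //; lia.
rewrite (nth_map 0) ?size_iota ?nth_iota; [congr p | |]; lia.
Qed.

Lemma sorted_ltn_nth_next s i x : sorted ltn s -> x \in s -> (i.+1 < size s)%N ->
  (nth 0 s i < x)%N -> (nth 0 s i.+1 <= x)%N.
Proof.
move=> s_ltn xs i1s lt_ix.
have s_leq : sorted leq s by move: s_ltn; rewrite ltn_sorted_uniq_leq => /andP[].
have lx : (index x s < size s)%N by rewrite index_mem.
rewrite -(nth_index 0 xs) in lt_ix *.
apply: (sorted_leq_nth leq_trans leqnn 0 s_leq) => //; rewrite ltnNge.
apply: contraTN lt_ix => le_xi; rewrite -leqNgt.
by apply: (sorted_leq_nth leq_trans leqnn 0 s_leq) => //; rewrite inE; lia.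
Qed.

End IncreasingSequences.

Section WallIndices.
Variables (R : realType) (n : nat) (Psi : seq 'rV[R]_n) (G : gallery R n).

Lemma mem_I_Psi k :
  (k \in I_Psi Psi G) = [&& (1 <= k)%N, (k <= glen G)%N & gwall G k \in Psi].
Proof.
rewrite mem_filter mem_iota; case: (gwall G k \in Psi); last by rewrite !andbF.
by rewrite andbT; congr (_ && _); lia.
Qed.

Lemma sorted_ltn_cons0_I_Psi : sorted ltn (0%N :: I_Psi Psi G).
Proof.
rewrite /= (path_sortedE ltn_trans) (sorted_filter ltn_trans) ?iota_ltn_sorted // andbT.
by apply/allP => k; rewrite mem_I_Psi => /andP[].
Qed.

Lemma restr_idxE i : restr_idx Psi G i = nth 0 (0%N :: I_Psi Psi G) i.
Proof. by case: i. Qed.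

Lemma restr_idx_wall i : (1 <= i <= size (I_Psi Psi G))%N ->
  [&& (1 <= restr_idx Psi G i)%N, (restr_idx Psi G i <= glen G)%N
    & gwall G (restr_idx Psi G i) \in Psi].
Proof.
case: i => // i /andP[_ lt_iI]; rewrite -mem_I_Psi; exact: mem_nth.
Qed.

Lemma restr_idx_pred_lt i : (1 <= i <= size (I_Psi Psi G))%N ->
  (restr_idx Psi G i.-1 < restr_idx Psi G i)%N.
Proof.
case: i => // i /andP[_ lt_iI]; rewrite !restr_idxE.
by apply: (sorted_ltn_nth ltn_trans 0 sorted_ltn_cons0_I_Psi); rewrite ?inE /=; lia.
Qed.

Lemma restr_idx_gap i j : (1 <= i <= size (I_Psi Psi G))%N ->
  (restr_idx Psi G i.-1 < j < restr_idx Psi G i)%N -> gwall G j \notin Psi.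
Proof.
move=> hi /andP[lt_j jlt]; apply/negP => jPsi.
have /and3P[_ k_le _] := restr_idx_wall hi.
case: i hi lt_j jlt k_le => // i /andP[_ lt_iI]; rewrite !restr_idxE => lt_j jlt k_le.
have jI : j \in 0%N :: I_Psi Psi G.
  by rewrite inE mem_I_Psi jPsi andbT; apply/orP; right; apply/andP; split; lia.
by have := sorted_ltn_nth_next sorted_ltn_cons0_I_Psi jI lt_iI lt_j; lia.
Qed.

End WallIndices.

Import Order.TTheory GRing.Theory Num.Theory.
Import numFieldNormedType.Exports.
Local Open Scope classical_set_scope.
Local Open Scope ring_scope.

Section InnerProduct.
Variables (R : realType) (n : nat).
Notation E := 'rV[R]_n.
Implicit Types u v w x : E.

Lemma dotE u v : dot u v = \sum_j u 0 j * v 0 j.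
Proof. by rewrite /dot mxE; apply: eq_bigr => j _; rewrite mxE. Qed.

Lemma dotC u v : dot u v = dot v u.
Proof. by rewrite !dotE; apply: eq_bigr => j _; rewrite mulrC. Qed.

Lemma dotDl u v w : dot (u + v) w = dot u w + dot v w.
Proof. by rewrite !dotE -big_split; apply: eq_bigr => j _; rewrite mxE mulrDl. Qed.

Lemma dotZl (c : R) u w : dot (c *: u) w = c * dot u w.
Proof. by rewrite !dotE mulr_sumr; apply: eq_bigr => j _; rewrite mxE mulrA. Qed.

Lemma dot0l w : dot 0 w = 0.
Proof. by rewrite -(scale0r 0) dotZl mul0r. Qed.

Lemma dotNl u w : dot (- u) w = - dot u w.
Proof. by rewrite -scaleN1r dotZl mulN1r. Qed.

Lemma dotBl u v w : dot (u - v) w = dot u w - dot v w.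
Proof. by rewrite dotDl dotNl. Qed.

Lemma dotDr u v w : dot w (u + v) = dot w u + dot w v.
Proof. by rewrite dotC dotDl !(dotC w). Qed.

Lemma dotZr (c : R) u w : dot w (c *: u) = c * dot w u.
Proof. by rewrite dotC dotZl dotC. Qed.

Lemma dotNr u w : dot w (- u) = - dot w u.
Proof. by rewrite dotC dotNl dotC. Qed.

Lemma dotBr u v w : dot w (u - v) = dot w u - dot w v.
Proof. by rewrite dotDr dotNr. Qed.

Lemma dot0r w : dot w 0 = 0.
Proof. by rewrite dotC dot0l. Qed.

Lemma dot_suml (I : Type) (s : seq I) (P : pred I) (F : I -> E) w :
  dot (\sum_(i <- s | P i) F i) w = \sum_(i <- s | P i) dot (F i) w.
Proof. by apply: (big_morph (fun u => dot u w)); [move=> u v; exact: dotDl | exact: dot0l]. Qed.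

Lemma dot_sumr (I : Type) (s : seq I) (P : pred I) (F : I -> E) w :
  dot w (\sum_(i <- s | P i) F i) = \sum_(i <- s | P i) dot w (F i).
Proof. by apply: (big_morph (fun u => dot w u)); [move=> u v; exact: dotDr | exact: dot0r]. Qed.

Lemma dot_ge0 x : 0 <= dot x x.
Proof. by rewrite dotE; apply: sumr_ge0 => j _; exact: sqr_ge0. Qed.

Lemma dot_eq0 x : (dot x x == 0) = (x == 0).
Proof.
apply/idP/eqP => [|->]; last by rewrite dot0l.
rewrite dotE psumr_eq0 => [/allP x0|j _]; last exact: sqr_ge0.
apply/rowP => j; rewrite mxE.
by have /(_ (mem_index_enum j)) := x0 j; rewrite -expr2 sqrf_eq0 => /eqP.
Qed.

Lemma dot_gt0 x : x != 0 -> 0 < dot x x.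
Proof. by rewrite lt_def dot_ge0 dot_eq0 andbT. Qed.

Lemma continuous_dot b : continuous (fun x : E => dot x b).
Proof.
have -> : (fun x : E => dot x b) = (fun x : E => \sum_(j <- index_enum 'I_n) x 0 j * b 0 j).
  by apply: funext => x; rewrite dotE.
elim: (index_enum _) => [|j s IH] x.
  by under eq_fun do rewrite big_nil; exact: cst_continuous.
under eq_fun do rewrite big_cons.
apply: (@continuousD _ _ _ (fun x : E => x 0 j * b 0 j)); last exact: IH.
apply: (@continuousM _ _ (fun x : E => x 0 j) (fun _ => b 0 j)).
  exact: coord_continuous.
exact: cst_continuous.
Qed.

Lemma hyperN (a : E) : hyper (- a) = hyper a.
Proof.
apply/seteqP; split => x; rewrite /hyper /= dotNr; first by move/eqP; rewrite oppr_eq0 => /eqP.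
by move=> ->; rewrite oppr0.
Qed.

(* [w] is the component of [s] orthogonal to [g]; moving off the patch centre along [w]
   stays on the patch, which forces [dot w s = 0] and hence [w = 0]. *)
Lemma vanish_on_patch_collinear g s x (e : R) : g != 0 -> dot x g = 0 -> 0 < e ->
  (forall y, dot y g = 0 -> ball x e y -> dot y s = 0) ->
  s = (dot s g / dot g g) *: g.
Proof.
move=> g0 xg e0 patch; set t := dot s g / dot g g.
have gg0 : dot g g != 0 by rewrite gt_eqF // dot_gt0.
set w := s - t *: g.
have wg : dot w g = 0 by rewrite /w dotBl dotZl /t divfK // subrr.
set eps := e / (`|w| + 1).
have w1 : 0 < `|w| + 1 by rewrite ltr_wpDl.
have eps0 : 0 < eps by rewrite divr_gt0.
have xs : dot x s = 0 by apply: patch => //; exact: ballxx.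
have ys : dot (x + eps *: w) s = 0.
  apply: patch; first by rewrite dotDl dotZl wg mulr0 addr0.
  rewrite -ball_normE /= opprD addrA subrr add0r normrN normrZ gtr0_norm //.
  by rewrite /eps mulrAC ltr_pdivrMr // ltr_pM2l // ltrDl.
have ws : dot w s = 0.
  by move: ys; rewrite dotDl xs add0r dotZl => /eqP; rewrite mulf_eq0 gt_eqF //= => /eqP.
have : dot w w == 0 by rewrite {2}/w dotBr dotZr ws wg mulr0 subrr.
by rewrite dot_eq0 subr_eq0 => /eqP.
Qed.

Lemma hyper_eq_collinear (a b : E) : a != 0 -> hyper b = hyper a ->
  b = (dot b a / dot a a) *: a.
Proof.
move=> a0 hab; apply: (vanish_on_patch_collinear (x := 0) (e := 1)) => //.
- by rewrite dot0l.
- by move=> y ya _; have : hyper b y by rewrite hab.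
Qed.

End InnerProduct.

Section HalfSpaces.
Variables (R : realType) (n : nat).
Notation E := 'rV[R]_n.

Lemma open_dot_gt0 b : open [set z : E | 0 < dot z b].
Proof.
rewrite -[X in open X]/((fun z => dot z b) @^-1` [set r | 0 < r]).
by apply: open_comp; [move=> *; exact: continuous_dot | exact: open_gt].
Qed.

Lemma closed_dot_ge0 b : closed [set z : E | 0 <= dot z b].
Proof.
rewrite -[X in closed X]/((fun z => dot z b) @^-1` [set r | 0 <= r]).
by apply: preimage_closed; [move=> *; exact: continuous_dot | exact: closed_ge].
Qed.

Lemma connected_component_dot_gt0 (S : set E) x y b :
  (forall z, S z -> dot z b != 0) ->
  connected_component S x y -> 0 < dot x b -> 0 < dot y b.
Proof.
move=> Sb Cy xb; set A := connected_component S x.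
have Ax : A x.
  by case: Cy => C [Cx CS _] _; exact: connected_component_refl (CS _ Cx).
have AIpos : A `&` [set z | 0 < dot z b] = A.
  apply: component_connected; first by exists x.
    by exists [set z | 0 < dot z b]; [exact: open_dot_gt0|].
  exists [set z | 0 <= dot z b]; first exact: closed_dot_ge0.
  apply/seteqP; split => z [Az zb]; split => //; first exact: ltW.
  rewrite /= lt_neqAle (zb : 0 <= dot z b) andbT eq_sym; apply: Sb.
  exact: connected_component_sub Az.
by have [] : (A `&` [set z | 0 < dot z b]) y by rewrite AIpos.
Qed.

Lemma connected_component_dot_lt0 (S : set E) x y b :
  (forall z, S z -> dot z b != 0) ->
  connected_component S x y -> dot x b < 0 -> dot y b < 0.
Proof.
move=> Sb Cy xb; rewrite -oppr_gt0 -dotNr.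
apply: (connected_component_dot_gt0 _ Cy); last by rewrite dotNr oppr_gt0.
by move=> z /Sb; rewrite dotNr oppr_eq0.
Qed.

Lemma closure_dot_ge0 (C : set E) b y : (forall z, C z -> 0 < dot z b) ->
  closure C y -> 0 <= dot y b.
Proof.
move=> Cb Cy; change ([set z | 0 <= dot z b] y).
have /closure_id -> := closed_dot_ge0 (b := b).
by apply: (closureS _ Cy) => z /Cb /ltW.
Qed.

End HalfSpaces.

Section SimpleSystems.
Variables (R : realType) (n : nat).
Notation E := 'rV[R]_n.
Implicit Types (S : seq E) (a b x : E).

Definition nonneg_comb S a :=
  exists c : E -> R, (forall x, 0 <= c x) /\ a = \sum_(x <- S) c x *: x.

Definition irredundant S :=
  forall b, b \in S -> ~ nonneg_comb [seq x <- S | x != b] b.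

Lemma big_seq_indicator_scale S a (k : R) : uniq S -> a \in S ->
  \sum_(x <- S) (if x == a then k else 0) *: x = k *: a.
Proof.
move=> uS aS; rewrite (bigD1_seq a) //= eqxx big1 ?addr0 // => x /negbTE ->.
by rewrite scale0r.
Qed.

Lemma big_ord_seq S (F : E -> E) : \sum_(i < size S) F S`_i = \sum_(x <- S) F x.
Proof. by rewrite (big_nth 0) big_mkord. Qed.

Lemma nonneg_comb_mem S a : uniq S -> a \in S -> nonneg_comb S a.
Proof.
move=> uS aS; exists (fun x => if x == a then 1 else 0); split.
  by move=> x; case: ifP.
by rewrite big_seq_indicator_scale ?scale1r.
Qed.

Lemma nonneg_comb_drop S a b : uniq S -> b \in S ->
  nonneg_comb [seq x <- S | x != b] b -> nonneg_comb S a ->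
  nonneg_comb [seq x <- S | x != b] a.
Proof.
move=> uS bS [d [d0 hb]] [c [c0 ->]].
exists (fun x => c b * d x + c x); split; first by move=> x; rewrite addr_ge0 ?mulr_ge0.
rewrite (bigD1_seq b) //= [X in c b *: X]hb !big_filter scaler_sumr -big_split /=.
by apply: eq_bigr => x _; rewrite scalerA scalerDl.
Qed.

Lemma exists_irredundant_generators (P S : seq E) : uniq S -> {subset S <= P} ->
  (forall a, a \in P -> nonneg_comb S a) ->
  exists2 S', [/\ uniq S', {subset S' <= P} & forall a, a \in P -> nonneg_comb S' a]
    & irredundant S'.
Proof.
have [k] := ubnP (size S); elim: k S => // k IH S le_Sk uS SP Sgen.
have [[b [bS b_red]]|S_irr] :=
  pselect (exists b, b \in S /\ nonneg_comb [seq x <- S | x != b] b); last first.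
  by exists S => // b bS b_red; apply: S_irr; exists b.
apply: (IH [seq x <- S | x != b]).
- rewrite size_filter -ltnS (leq_trans _ le_Sk) // ltnS -(count_predC (pred1 b) S).
  have -> : count (fun x => x != b) S = count (predC (pred1 b)) S by [].
  by rewrite -[X in (X < _)%N]add0n ltn_add2r -has_count has_pred1.
- by rewrite filter_uniq.
- by move=> x; rewrite mem_filter => /andP[_ /SP].
- by move=> a aP; apply: nonneg_comb_drop => //; exact: Sgen.
Qed.

Lemma dot_nonneg_comb_ge0 x0 S (c : E -> R) : (forall x, 0 <= c x) ->
  (forall x, x \in S -> 0 < dot x0 x) -> 0 <= dot x0 (\sum_(x <- S) c x *: x).
Proof.
move=> c0 Spos; rewrite dot_sumr big_seq; apply: sumr_ge0 => x xS.
by rewrite dotZr mulr_ge0 // ltW // Spos.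
Qed.

Lemma nonneg_comb_eq0 x0 S (c : E -> R) : (forall x, x \in S -> 0 <= c x) ->
  (forall x, x \in S -> 0 < dot x0 x) -> \sum_(x <- S) c x *: x = 0 ->
  forall x, x \in S -> c x = 0.
Proof.
move=> c0 Spos /(congr1 (dot x0)); rewrite dot0r dot_sumr big_seq => /eqP.
rewrite psumr_eq0 => [/allP cS x xS|x xS]; last by rewrite dotZr mulr_ge0 ?c0 // ltW ?Spos.
have /implyP/(_ xS) := cS x xS; rewrite dotZr mulf_eq0 => /orP[/eqP //|].
by rewrite gt_eqF // Spos.
Qed.

(* If [k1 a1 - k2 a2] were a nonnegative combination of [S], then either [a1] would be
   one of the others (when its own coefficient is below [k1]), or evaluating at [x0]
   would give a nonpositive number equal to a positive one. *)
Lemma not_nonneg_comb_diff x0 S a1 a2 (k1 k2 : R) : uniq S ->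
  (forall x, x \in S -> 0 < dot x0 x) -> a1 \in S -> a2 \in S -> a1 != a2 ->
  0 < k1 -> 0 < k2 -> ~ nonneg_comb [seq x <- S | x != a1] a1 ->
  ~ nonneg_comb S (k1 *: a1 - k2 *: a2).
Proof.
move=> uS Spos a1S a2S a12 k10 k20 a1_irr [d [d0]].
rewrite (bigD1_seq a1) //= -big_filter; set S1 := [seq x <- S | x != a1] in a1_irr *.
move=> hd; have a2S1 : a2 \in S1 by rewrite mem_filter eq_sym a12.
have eq1 : (k1 - d a1) *: a1 = k2 *: a2 + \sum_(x <- S1) d x *: x.
  move/eqP: hd; rewrite subr_eq => /eqP hd.
  by rewrite scalerBl hd (addrC _ (k2 *: a2)) addrA addrAC addrK.
have [lt_d_k1|le_k1_d] := ltP (d a1) k1.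
  apply: a1_irr; set m := k1 - d a1; have m0 : 0 < m by rewrite subr_gt0.
  exists (fun x => (d x + (if x == a2 then k2 else 0)) / m); split.
    move=> x; apply: divr_ge0 (ltW m0); apply: addr_ge0 => //.
    by case: ifP => // _; exact: ltW.
  rewrite -[a1]scale1r -(mulVf (lt0r_neq0 m0)) -scalerA eq1.
  rewrite -(big_seq_indicator_scale k2 _ a2S1) ?filter_uniq // addrC -big_split.
  by rewrite scaler_sumr; apply: eq_bigr => x _; rewrite /= -scalerDl scalerA mulrC.
have := congr1 (dot x0) eq1; rewrite dotZr dotDr dotZr => h.
have : (k1 - d a1) * dot x0 a1 <= 0 by rewrite mulr_le0_ge0 ?subr_le0 // ltW // Spos.
rewrite h leNgt ltr_pwDl ?mulr_gt0 ?Spos // dot_nonneg_comb_ge0 // => x.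
by rewrite mem_filter => /andP[_]; exact: Spos.
Qed.

(* Splitting a vanishing combination into positive and negative parts [f] and [g] gives
   [v = sum f x x = sum g x x]; obtuseness makes [dot v v <= 0], so [v = 0] and both
   parts vanish by positivity at [x0]. *)
Lemma obtuse_lin_indep x0 S : uniq S -> (forall s, s \in S -> 0 < dot x0 s) ->
  (forall a b, a \in S -> b \in S -> a != b -> dot a b <= 0) -> lin_indep S.
Proof.
move=> uS Spos obtuse c hc i iS.
set c' := fun x : E => c (index x S).
have c'E j : (j < size S)%N -> c' S`_j = c j by move=> jS; rewrite /c' index_uniq.
set f := fun x => Num.max (c' x) 0; set g := fun x => Num.max (- c' x) 0.
have f0 x : 0 <= f x by rewrite le_max lexx orbT.
have g0 x : 0 <= g x by rewrite le_max lexx orbT.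
have fgE x : f x - g x = c' x.
  rewrite /f /g; have [cx0|cx0] := leP 0 (c' x).
    by rewrite (max_idPr _) ?subr0 // oppr_le0.
  by rewrite (max_idPl _) ?sub0r ?opprK // oppr_ge0 ltW.
have fgS : \sum_(x <- S) f x *: x = \sum_(x <- S) g x *: x.
  apply/eqP; rewrite -subr_eq0 -sumrB; apply/eqP; rewrite -[RHS]hc -big_ord_seq.
  by apply: eq_bigr => j _; rewrite -scalerBl fgE c'E.
set v := \sum_(x <- S) f x *: x.
have vv : dot v v <= 0.
  rewrite {2}/v fgS /v dot_suml big_seq; apply: sumr_le0 => x xS.
  rewrite dotZl dot_sumr mulr_sumr big_seq; apply: sumr_le0 => y yS.
  rewrite dotZr mulrA; have [<-|xy] := eqVneq x y; last first.
    by rewrite mulr_ge0_le0 ?mulr_ge0 // obtuse.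
  rewrite /f /g; have [cx0|cx0] := leP 0 (c' x); last by rewrite !mul0r.
  by rewrite (max_idPr (_ : - c' x <= 0)) ?mulr0 ?mul0r // oppr_le0.
have v0 : v = 0 by apply/eqP; rewrite -dot_eq0 eq_le vv dot_ge0.
have f_eq0 := nonneg_comb_eq0 (fun x _ => f0 x) Spos v0.
have g_eq0 := nonneg_comb_eq0 (fun x _ => g0 x) Spos (etrans (esym fgS) v0).
by rewrite -c'E // -fgE f_eq0 ?g_eq0 ?subr0 ?mem_nth.
Qed.

Lemma refl_self a : a != 0 -> refl a a = - a.
Proof.
move=> a0; have aa : dot a a != 0 by rewrite gt_eqF // dot_gt0.
by rewrite /refl mulfK // scaler_nat mulr2n opprD addrA subrr add0r.
Qed.

Section Existence.
Variables (Psi : seq E) (x0 : E).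
Hypotheses (Psi0 : 0 \notin Psi)
  (Psi_refl : forall a b, a \in Psi -> b \in Psi -> refl a b \in Psi)
  (x0_reg : forall a, a \in Psi -> dot x0 a != 0).

Let P := [seq a <- Psi | 0 < dot x0 a].

Lemma oppr_root a : a \in Psi -> - a \in Psi.
Proof.
move=> aPsi; have a0 : a != 0 by apply: contraNneq Psi0 => <-.
by rewrite -refl_self //; exact: Psi_refl.
Qed.

Lemma mem_positive_roots a : a \in Psi -> (a \in P) || (- a \in P).
Proof.
move=> aPsi; rewrite !mem_filter aPsi oppr_root // dotNr oppr_gt0 !andbT.
by rewrite -neq_lt eq_sym x0_reg.
Qed.

(* Reflecting [b] in [a] gives [b - c a] with [c > 0] if [dot a b > 0]; this root is
   positive or negative, and either way contradicts irredundancy. *)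
Lemma irredundant_obtuse S : uniq S -> {subset S <= P} ->
  (forall a, a \in P -> nonneg_comb S a) -> irredundant S ->
  forall a b, a \in S -> b \in S -> a != b -> dot a b <= 0.
Proof.
move=> uS SP Sgen S_irr a b aS bS ab; rewrite leNgt; apply/negP => ab0.
have Spos s : s \in S -> 0 < dot x0 s by move/SP; rewrite mem_filter => /andP[].
have [aPsi bPsi] : a \in Psi /\ b \in Psi.
  by move: (SP a aS) (SP b bS); rewrite !mem_filter => /andP[_ ->] /andP[_ ->].
have aa : 0 < dot a a by rewrite dot_gt0 //; apply: contraNneq Psi0 => <-.
have c0 : 0 < 2 * dot b a / dot a a by rewrite divr_gt0 // mulr_gt0 // dotC.
have := mem_positive_roots (Psi_refl aPsi bPsi); rewrite /refl => /orP[rP|rP].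
  apply: (not_nonneg_comb_diff uS Spos bS aS _ ltr01 c0 (S_irr b bS)).
    by rewrite eq_sym.
  by rewrite scale1r; exact: Sgen.
apply: (not_nonneg_comb_diff uS Spos aS bS ab c0 ltr01 (S_irr a aS)).
by rewrite scale1r -opprB; exact: Sgen.
Qed.

(* The simple system is an irredundant set of generators of the cone spanned by the roots
   positive at [x0]. *)
Lemma exists_simple_system :
  exists S, simple_system Psi S /\ (forall s, s \in S -> 0 < dot x0 s).
Proof.
have [S [uS SP Sgen] S_irr] : exists2 S,
    [/\ uniq S, {subset S <= P} & forall a, a \in P -> nonneg_comb S a] & irredundant S.
  apply: (@exists_irredundant_generators P (undup P)) => [||a aP]; rewrite ?undup_uniq //.
    by move=> x; rewrite mem_undup.
  by apply: nonneg_comb_mem; rewrite ?undup_uniq ?mem_undup.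
have Spos s : s \in S -> 0 < dot x0 s by move/SP; rewrite mem_filter => /andP[].
have SPsi : {subset S <= Psi} by move=> s /SP; rewrite mem_filter => /andP[].
exists S; split => //; split => //.
  exact: (obtuse_lin_indep uS Spos (irredundant_obtuse uS SP Sgen S_irr)).
move=> a /mem_positive_roots /orP[/Sgen [d [d0 ->]]|/Sgen [d [d0 hd]]].
  by exists (fun i => d S`_i); rewrite (big_ord_seq S (fun x => d x *: x)); split; [|left].
exists (fun i => - d S`_i); split; last by right => i; rewrite oppr_le0.
rewrite (big_ord_seq S (fun x => - d x *: x)) -[a]opprK hd -sumrN.
by apply: eq_bigr => x _; rewrite scaleNr.
Qed.

End Existence.

End SimpleSystems.

Section WallsAndSimpleRoots.
Variables (R : realType) (n : nat).
Notation E := 'rV[R]_n.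
Implicit Types (X : seq E) (a b : E) (A B C D : set E).

Definition wall_patch C a := exists x, hyper a x /\ exists2 e : R, 0 < e &
  forall y, hyper a y -> ball x e y -> closure C y.

Lemma wall_patchN C a : wall_patch C (- a) = wall_patch C a.
Proof. by rewrite /wall_patch hyperN. Qed.

Lemma connected_through_sym C D a : connected_through C D a -> connected_through D C a.
Proof.
move=> [x [xa [e e0 patch]]]; exists x; split => //; exists e => // y ya yx.
by have [] := patch y ya yx.
Qed.

Lemma connected_through_wall_patch C D a : connected_through C D a ->
  wall_patch C a /\ wall_patch D a.
Proof.
by move=> [x [xa [e e0 patch]]]; split; exists x; split => //; exists e => // y ya yx;
  have [] := patch y ya yx.
Qed.

Lemma simple_roots_pos X C : simple_roots X C `<=` pos_roots X C.
Proof. by move=> a [S [_ Spos aS]]; exact: Spos. Qed.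

Lemma simple_roots_eq X C D : pos_roots X C = pos_roots X D ->
  simple_roots X C = simple_roots X D.
Proof. by rewrite /simple_roots => ->. Qed.

Lemma same_side_scale (t : R) a A B : t != 0 ->
  (forall z, A z -> 0 < dot z a) -> (forall z, B z -> 0 < dot z a) ->
  same_side (t *: a) A B.
Proof.
move=> t0 Apos Bpos; have [tn|tp] := ltP t 0.
  right; split => z /= zA; rewrite dotZr nmulr_rlt0 //; [exact: Apos | exact: Bpos].
have {}tp : 0 < t by rewrite lt_def t0.
left; split => z /= zA; rewrite dotZr pmulr_rgt0 //; [exact: Apos | exact: Bpos].
Qed.

End WallsAndSimpleRoots.

Section Chambers.
Variables (R : realType) (n : nat) (Phi Psi : seq 'rV[R]_n).
Notation E := 'rV[R]_n.
Implicit Types (a b : E) (C D : set E).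
Hypotheses (Phi_root : root_system Phi) (Psi_sub : root_subsystem Phi Psi).

Lemma root_neq0 a : a \in Phi -> a != 0.
Proof. by case: Phi_root => Phi0 _ _ aPhi; apply: contraNneq Phi0 => <-. Qed.

Lemma Psi_sub_Phi : {subset Psi <= Phi}.
Proof. by case: Psi_sub. Qed.

Lemma Psi_refl : forall a b, a \in Psi -> b \in Psi -> refl a b \in Psi.
Proof. by case: Psi_sub => _ _; apply. Qed.

Lemma Psi_neq0 : 0 \notin Psi.
Proof. by apply/negP => /Psi_sub_Phi /root_neq0; rewrite eqxx. Qed.

Lemma Psi_oppr a : a \in Psi -> - a \in Psi.
Proof. move=> aPsi; exact: (@oppr_root R n Psi Psi_neq0 Psi_refl a aPsi). Qed.

Lemma chamber_regular C z : is_chamber Phi C -> C z -> regular Phi z.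
Proof. by case=> x _ ->; exact: connected_component_sub. Qed.

Lemma chamber_nonempty C : is_chamber Phi C -> exists x, C x.
Proof. by case=> x rx ->; exists x; exact: connected_component_refl. Qed.

Lemma chamber_sub_restr C : is_chamber Phi C -> C `<=` chamber_restr Psi C.
Proof.
move=> hC z Cz; exists z => //; apply: connected_component_refl => a aPsi.
exact: chamber_regular hC Cz a (Psi_sub_Phi aPsi).
Qed.

Lemma chamber_sign C b : is_chamber Phi C -> b \in Phi ->
  (forall z, C z -> 0 < dot z b) \/ (forall z, C z -> dot z b < 0).
Proof.
case=> x rx -> bPhi; have Sb z : regular Phi z -> dot z b != 0 by move/(_ b bPhi).
have := Sb x rx; rewrite neq_lt => /orP[xb|xb].
  by right => z Cz; exact: connected_component_dot_lt0 Sb Cz xb.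
by left => z Cz; exact: connected_component_dot_gt0 Sb Cz xb.
Qed.

Lemma chamber_pos_at C b x : is_chamber Phi C -> b \in Phi -> C x -> 0 < dot x b ->
  forall z, C z -> 0 < dot z b.
Proof.
move=> hC bPhi Cx xb; case: (chamber_sign hC bPhi) => // Cneg.
by move: (Cneg x Cx); rewrite ltNge ltW.
Qed.

Lemma chamber_pos_root C a : is_chamber Phi C -> a \in Psi ->
  pos_roots Psi C a \/ pos_roots Psi C (- a).
Proof.
move=> hC aPsi; have aNPsi := Psi_oppr aPsi.
case: (chamber_sign hC (Psi_sub_Phi aPsi)) => apos; [left | right]; split => // z Cz.
by rewrite dotNr oppr_gt0; exact: apos.
Qed.

Lemma pos_roots_restr C : is_chamber Phi C ->
  pos_roots Psi (chamber_restr Psi C) = pos_roots Psi C.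
Proof.
move=> hC; apply/seteqP; split => b [bPsi bpos]; split => // z.
  by move/(chamber_sub_restr hC); exact: bpos.
move=> [x Cx xz]; apply: connected_component_dot_gt0 xz (bpos x Cx).
by move=> w /(_ b bPsi).
Qed.

Lemma root_vanishing_on_patch a b y0 (e : R) : a \in Phi -> b \in Phi ->
  dot y0 a = 0 -> 0 < e -> (forall y, dot y a = 0 -> ball y0 e y -> dot y b = 0) ->
  b = a \/ b = - a.
Proof.
move=> aPhi bPhi y0a e0 patch.
have := vanish_on_patch_collinear (root_neq0 aPhi) y0a e0 patch; set t := _ / _ => bt.
case: Phi_root => _ _ /(_ a t aPhi); rewrite -bt => /(_ bPhi) [t1|t1].
  by left; rewrite bt t1 scale1r.
by right; rewrite bt t1 scaleN1r.
Qed.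

Lemma wall_root_mem_simple C S g : is_chamber Phi C -> simple_system Psi S ->
  (forall s, s \in S -> pos_roots Psi C s) -> pos_roots Psi C g -> wall_patch C g ->
  g \in S.
Proof.
move=> hC [uS SPsi _ Sgen] Spos [gPsi gpos] [y0 [y0g [e e0 patch]]].
have [x Cx] := chamber_nonempty hC.
have Sipos (i : 'I_(size S)) z : C z -> 0 < dot z S`_i.
  exact: (Spos _ (mem_nth 0 (ltn_ord i))).2.
have [c [gE csign]] := Sgen g gPsi.
have c_ge0 i : 0 <= c i.
  case: csign => // c_le0; suff : dot x g <= 0 by rewrite leNgt gpos.
  rewrite gE dot_sumr; apply: sumr_le0 => j _.
  by rewrite dotZr mulr_le0_ge0 // ltW // Sipos.
have [i0 ci0] : exists i0 : 'I_(size S), c i0 != 0.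
  case: (boolP [exists i : 'I_(size S), c i != 0]) => [/existsP //|/existsPn c_eq0].
  have := root_neq0 (Psi_sub_Phi gPsi); rewrite gE big1 ?eqxx // => i _.
  by move/negPn/eqP: (c_eq0 i) => ->; rewrite scale0r.
have si0_vanish y : dot y g = 0 -> ball y0 e y -> dot y S`_i0 = 0.
  move=> yg yb; have Cy := patch y yg yb.
  suff /eqP : c i0 * dot y S`_i0 = 0 by rewrite mulf_eq0 (negbTE ci0) => /eqP.
  apply: (@psumr_eq0P _ _ xpredT (fun i : 'I_(size S) => c i * dot y S`_i)) => // [i _|].
    by rewrite mulr_ge0 // (closure_dot_ge0 _ Cy) // => z; exact: Sipos.
  by rewrite -[RHS]yg gE dot_sumr; apply: eq_bigr => i _; rewrite dotZr.
have := root_vanishing_on_patch (Psi_sub_Phi gPsi) (Psi_sub_Phi (SPsi _ (mem_nth 0 (ltn_ord i0))))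
  y0g e0 si0_vanish.
case=> [<-|si0E]; first exact: mem_nth.
by have := Sipos i0 x Cx; rewrite si0E dotNr oppr_gt0 ltNge ltW ?gpos.
Qed.

Lemma wall_simple_root C g : is_chamber Phi C -> pos_roots Psi C g -> wall_patch C g ->
  simple_roots Psi (chamber_restr Psi C) g.
Proof.
move=> hC gpos Cg; have [x Cx] := chamber_nonempty hC.
have [S [Ssimple Sx]] := exists_simple_system Psi_neq0 Psi_refl
  (fun a aPsi => chamber_regular hC Cx (Psi_sub_Phi aPsi)).
have Spos s : s \in S -> pos_roots Psi C s.
  have [_ SPsi _ _] := Ssimple.
  move=> sS; split; first exact: SPsi.
  exact: chamber_pos_at hC (Psi_sub_Phi (SPsi _ sS)) Cx (Sx _ sS).
exists S; split => //; last exact: wall_root_mem_simple hC Ssimple Spos gpos Cg.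
by move=> b /Spos; rewrite pos_roots_restr.
Qed.

Lemma pos_roots_cross C D a : is_chamber Phi C -> is_chamber Phi D ->
  connected_through C D a -> a \in Phi -> a \notin Psi ->
  pos_roots Psi C `<=` pos_roots Psi D.
Proof.
move=> hC hD [y0 [y0a [e e0 patch]]] aPhi aPsi b [bPsi Cpos]; split => //.
case: (chamber_sign hD (Psi_sub_Phi bPsi)) => // Dneg; exfalso.
have b_vanish y : dot y a = 0 -> ball y0 e y -> dot y b = 0.
  move=> ya yb; have [cC cD] := patch y ya yb.
  have : 0 <= dot y (- b).
    by apply: (closure_dot_ge0 _ cD) => z Dz; rewrite dotNr oppr_gt0; exact: Dneg.
  by rewrite dotNr oppr_ge0 => le0; apply/eqP; rewrite eq_le le0 (closure_dot_ge0 Cpos cC).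
case: (root_vanishing_on_patch aPhi (Psi_sub_Phi bPsi) y0a e0 b_vanish) => bE.
  by move: aPsi; rewrite -bE bPsi.
by move: aPsi; rewrite -[a]opprK -bE Psi_oppr.
Qed.

Lemma pos_roots_cross_eq C D a : is_chamber Phi C -> is_chamber Phi D ->
  connected_through C D a -> a \in Phi -> a \notin Psi ->
  pos_roots Psi C = pos_roots Psi D.
Proof.
move=> hC hD CD aPhi aPsi; apply/seteqP; split; first exact: pos_roots_cross CD aPhi aPsi.
exact: pos_roots_cross (connected_through_sym CD) aPhi aPsi.
Qed.

Lemma lift_same_side C D a b : is_chamber Phi C -> a \in Psi -> wall_patch C a ->
  chamber_lifts Phi Psi D (chamber_restr Psi C) -> hyper b = hyper a -> b != 0 ->
  same_side b D C.
Proof.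
move=> hC aPsi Ca lift ba b0.
wlog apos : a aPsi Ca ba / pos_roots Psi C a => [hwlog|].
  case: (chamber_pos_root hC aPsi) => apos; first exact: hwlog apos.
  apply: (hwlog (- a)) => //; rewrite ?wall_patchN ?hyperN //.
  exact: Psi_oppr.
have [_ Dpos] : pos_roots Phi D a by apply/simple_roots_pos/lift/wall_simple_root.
have [_ Cpos] := apos.
rewrite (hyper_eq_collinear (root_neq0 (Psi_sub_Phi aPsi)) ba).
apply: same_side_scale Dpos Cpos; apply: contraNneq b0 => t0.
by rewrite (hyper_eq_collinear (root_neq0 (Psi_sub_Phi aPsi)) ba) t0 scale0r.
Qed.

Lemma gallery_pos_roots_eq (G : gallery R n) j k : is_gallery Phi G ->
  (j <= k <= glen G)%N -> (forall i, (j < i <= k)%N -> gwall G i \notin Psi) ->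
  pos_roots Psi (gch G j) = pos_roots Psi (gch G k).
Proof.
move=> [Gch Gwall] /andP[]; elim: k => [|k IH] jk kG walls.
  by have -> : j = 0%N by lia.
case: (ltngtP j k.+1) jk => // [jk|->] _ //.
have [wPhi ct] := Gwall k.+1 kG.
rewrite IH; [|lia|lia| by move=> i hi; apply: walls; lia].
have wk : gwall G k.+1 \notin Psi by apply: walls; lia.
exact: pos_roots_cross_eq (Gch k (ltnW kG)) (Gch k.+1 kG) ct wPhi wk.
Qed.

Lemma gallery_lift_wall (G H : gallery R n) i : is_gallery Phi G -> is_gallery Phi H ->
  gallery_lifts Phi Psi H (restr_gallery Psi G) -> (1 <= i <= glen H)%N ->
  let k := restr_idx Psi G i in
  [/\ hyper (gwall G k) = hyper (gwall H i),
      same_side (gwall H i) (gch H i) (gch G k)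
    & same_side (gwall H i) (gch H i.-1) (gch G k.-1)].
Proof.
move=> hG [Hch Hwall] [lenH wallH liftH] hi k.
have hiI : (1 <= i <= size (I_Psi Psi G))%N by rewrite lenH in hi.
have /and3P[k1 kG kPsi] := restr_idx_wall hiI.
have [Gch Gwall] := hG; have [_ ct] := Gwall k (introT andP (conj k1 kG)).
have [patch_pred patch_k] := connected_through_wall_patch ct.
have Hi := wallH i hi; have Hi0 := root_neq0 (Hwall i hi).1.
have le_iH : (i <= glen H)%N by case/andP: hi.
split; first by rewrite Hi.
  exact: lift_same_side (Gch k kG) kPsi patch_k (liftH i le_iH) Hi Hi0.
apply: lift_same_side (Gch k.-1 _) kPsi patch_pred _ Hi Hi0; first lia.
have lt_k := restr_idx_pred_lt hiI.
have same_pos : pos_roots Psi (chamber_restr Psi (gch G k.-1)) =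
    pos_roots Psi (chamber_restr Psi (gch G (restr_idx Psi G i.-1))).
  rewrite !pos_roots_restr; [|by apply: Gch; lia..].
  apply/esym/gallery_pos_roots_eq => //; first by apply/andP; split; lia.
  by move=> j hj; apply: (restr_idx_gap hiI); lia.
by rewrite /chamber_lifts (simple_roots_eq same_pos); apply: liftH; lia.
Qed.

End Chambers.

Theorem theorem3 (R : realType) (n : nat) (Phi Psi : seq 'rV[R]_n)
    (Gamma Delta : gallery R n) (p : nat -> nat) :
  root_system Phi ->
  root_subsystem Phi Psi ->
  saturated Phi Psi ->
  is_gallery Phi Gamma ->
  is_gallery Phi Delta ->
  gallery_lifts Phi Psi Delta (restr_gallery Psi Gamma) ->
  incr_embedding_onto p (glen (restr_gallery Psi Gamma)) (I_Psi Psi Gamma) ->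
  [/\ p_pair p Delta Gamma, sign_positive p Delta Gamma
    & cosign_positive p Delta Gamma].
Proof.
move=> Phi_root Psi_sub _ hG hD hlift hp.
have pE i : (1 <= i <= glen Delta)%N -> p i = restr_idx Psi Gamma i.
  have [lenD _ _] := hlift; rewrite lenD => hi.
  rewrite (incr_embedding_onto_nth (path_sorted (sorted_ltn_cons0_I_Psi Psi Gamma)) hp hi).
  by case: i hi.
split=> i hi; rewrite pE //;
  by have [] := gallery_lift_wall Phi_root Psi_sub hG hD hlift hi.
Qed.
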